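(* Let $S$ be a semigroup and $a\in S$ an idempotent with $aSa\subseteq\operatorname{Reg}(S)$; let $P=\{x\in Sa: x\,\mathscr L\,ax\}$, let $H_a$ be the $\mathscr H$-class of $a$ in $S$ (which is the group of units of the monoid $aSa$), and let $\rho$ be the number of $\mathscr R^P$-classes contained in $\widehat R^a_a=\{x\in P: ax\ \mathscr R^{aSa}\ a\}$. Suppose $aSa\setminus H_a$ is an ideal of $aSa$. Then $$\operatorname{rank}(P)\ge \operatorname{rank}(aSa:H_a)+\max(\rho,\operatorname{rank}(H_a)),$$ with equality if $P$ is RI-dominated.
   Context: $P$ is a (regular) subsemigroup of $S$. $\mathscr R^P$, $\mathscr R^{aSa}$ denote Green's $\mathscr R$-relation in $P$ and in $aSa$. For a semigroup $T$, $\operatorname{rank}(T)$ is the minimum cardinality of a generating set, and for $A\subseteq T$, the relative rank $\operatorname{rank}(T:A)$ is the minimum cardinality of $U\subseteq T$ with $T=\langle A\cup U\rangle$. A semigroup $T$ is RI-dominated if for every $x\in T$ there is a right identity $e$ of $T$ (i.e. $ye=y$ for all $y\in T$) with $x\in eT^1$. *)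

(* abstract (possibly infinite) semigroups, subsets as predicates,
   cardinalities compared via injections between sigma types. *)
From Stdlib Require Import Classical.

Section Semigroup.
Variable S : Type.
Variable mul : S -> S -> S.

Definition sset := S -> Prop.
Definition subset (A B : sset) : Prop := forall x, A x -> B x.
Definition setminus (A B : sset) : sset := fun x => A x /\ ~ B x.

(* Green's relations in S (via principal one-sided ideals of S^1). *)
Definition leR (x y : S) : Prop := x = y \/ exists s, x = mul y s.
Definition leL (x y : S) : Prop := x = y \/ exists s, x = mul s y.
Definition GreenR (x y : S) : Prop := leR x y /\ leR y x.
Definition GreenL (x y : S) : Prop := leL x y /\ leL y x.
Definition GreenH (x y : S) : Prop := GreenR x y /\ GreenL x y.

Definition leR_in (T : sset) (x y : S) : Prop := x = y \/ exists t, T t /\ x = mul y t.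
Definition GreenR_in (T : sset) (x y : S) : Prop :=
  T x /\ T y /\ leR_in T x y /\ leR_in T y x.

Definition regular (x : S) : Prop := exists y, mul (mul x y) x = x.

Definition local (a : S) : sset := fun x => exists s, x = mul (mul a s) a.
Definition rightS (a : S) : sset := fun x => exists s, x = mul s a.
Definition Pset (a : S) : sset := fun x => rightS a x /\ GreenL x (mul a x).
Definition Hclass (a : S) : sset := fun x => GreenH x a.
Definition Rhat (a : S) : sset := fun x => Pset a x /\ GreenR_in (local a) (mul a x) a.

Definition RPclasses_in_Rhat (a : S) : Type :=
  { C : sset | exists x, Pset a x /\ C = (fun y => GreenR_in (Pset a) x y)
                         /\ subset C (Rhat a) }.

Definition ideal_of (T I : sset) : Prop :=
  subset I T /\ forall x y, I x -> T y -> I (mul x y) /\ I (mul y x).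

Inductive gen (A : sset) : sset :=
| gen_base : forall x, A x -> gen A x
| gen_mul : forall x y, gen A x -> gen A y -> gen A (mul x y).

Definition setU (A B : sset) : sset := fun x => A x \/ B x.

Definition generates (T U : sset) : Prop := subset U T /\ forall x, T x -> gen U x.
(* U witnesses the relative rank of T modulo A: T = <A u U> *)
Definition rel_generates (T A U : sset) : Prop :=
  subset U T /\ forall x, T x -> gen (setU A U) x.

Definition RI_dominated (T : sset) : Prop :=
  forall x, T x -> exists e, T e /\ (forall y, T y -> mul y e = y) /\
                          (x = e \/ exists t, T t /\ x = mul e t).

End Semigroup.

Definition sig_of {S : Type} (A : S -> Prop) : Type := { x : S | A x }.
Definition card_le (X Y : Type) : Prop := exists f : X -> Y, forall u v, f u = f v -> u = v.
Arguments subset {S}.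
Arguments setminus {S}.
Arguments setU {S}.

(* The map [x |-> a x] is a homomorphism from [P] onto [aSa], and since
   [aSa \ H_a] is an ideal of [aSa], a product of elements of [P] is sent into
   [H_a] only if each factor is.  So for a generating set [U] of [P], the
   elements of [aU] outside [H_a] generate [aSa] modulo [H_a], those inside
   generate [H_a], and every R^P-class in [Rhat] is the class of some [u] in [U]
   with [a u] in [H_a]; this gives the lower bound.
   For the upper bound take [V0] and [W0] of least cardinality (cardinals are
   well ordered, by Zorn's lemma) and match the fibre [{x in P | a x = a}] with
   [W0] by a relation that is injective from the smaller side.  If [P] is
   RI-dominated, [V0] together with the products [x w] of matched pairs generates
   [P]; these products are told apart either by [a x w = w] or by their
   R^P-classes. *)

From Stdlib Require Import Classical IndefiniteDescription ProofIrrelevance.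
From Stdlib Require Import FunctionalExtensionality PropExtensionality.
From mathcomp Require classical_sets.

Set Bullet Behavior "Strict Subproofs".

Lemma proj1_sig_inj {T : Type} (A : T -> Prop) (u v : sig A) :
  proj1_sig u = proj1_sig v -> u = v.
Proof. apply eq_sig_hprop. intros. apply proof_irrelevance. Qed.

Lemma card_le_rel (X Y : Type) (R : X -> Y -> Prop) :
  (forall x, exists y, R x y) -> (forall x x' y, R x y -> R x' y -> x = x') ->
  card_le X Y.
Proof.
  intros total inj.
  exists (fun x => proj1_sig (constructive_indefinite_description _ (total x))).
  intros x x' e.
  apply (inj x x' (proj1_sig (constructive_indefinite_description _ (total x)))).
  - exact (proj2_sig (constructive_indefinite_description _ (total x))).
  - rewrite e. exact (proj2_sig (constructive_indefinite_description _ (total x'))).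
Qed.

Lemma card_le_refl (X : Type) : card_le X X.
Proof. exists (fun x => x). auto. Qed.

Lemma card_le_trans (X Y Z : Type) : card_le X Y -> card_le Y Z -> card_le X Z.
Proof.
  intros [f finj] [g ginj]. exists (fun x => g (f x)). auto.
Qed.

Lemma card_le_sum (X X' Y Y' : Type) :
  card_le X X' -> card_le Y Y' -> card_le (X + Y) (X' + Y').
Proof.
  intros [f finj] [g ginj].
  exists (fun s => match s with inl x => inl (f x) | inr y => inr (g y) end).
  intros [x|y] [x'|y'] e; inversion e; f_equal; auto.
Qed.

Section CardinalMinimum.
Variables (I X : Type) (A : I -> X -> Prop).

Definition disjoint_selections (M : (I -> X) -> Prop) : Prop :=
  (forall t, M t -> forall i, A i (t i)) /\
  (forall t t', M t -> M t' -> (exists i, t i = t' i) -> t = t').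

(* If no [A m] were exhausted, a selection avoiding every member of [M] at every
   index could be added to [M], contradicting maximality. *)
Lemma disjoint_selections_exhaust (i0 : I) :
  exists M, disjoint_selections M /\
    exists m, forall x, A m x -> exists t, M t /\ t m = x.
Proof.
  destruct (@classical_sets.Zorn_bigcup (I -> X) disjoint_selections) as [M [[MA Mdisj] Mmax]].
  - intros F FM chain. split.
    + intros t [Y FY Yt]. exact (proj1 (FM Y FY) t Yt).
    + intros t t' [Y FY Yt] [Y' FY' Yt'] e.
      destruct (chain Y Y' FY FY') as [sub | sub].
      * exact (proj2 (FM Y' FY') t t' (sub t Yt) Yt' e).
      * exact (proj2 (FM Y FY) t t' Yt (sub t' Yt') e).
  - exists M. split; [split; assumption |].
    apply NNPP; intros not_exhausted.
    assert (avoid : forall i, exists x, A i x /\ forall t, M t -> t i <> x).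
    { intros i. apply NNPP; intros no_avoid. apply not_exhausted. exists i.
      intros x Ax. apply NNPP; intros no_t. apply no_avoid. exists x. split; [exact Ax |].
      intros t Mt e. apply no_t. exists t. split; assumption. }
    destruct (functional_choice _ avoid) as [s hs].
    apply (Mmax (fun t => M t \/ t = s)).
    + split; [intros t Mt; left; exact Mt |].
      intros sub. destruct (proj2 (hs i0) s (sub s (or_intror eq_refl)) eq_refl).
    + split.
      * intros t [Mt | ->]; [exact (MA t Mt) | exact (fun i => proj1 (hs i))].
      * intros t t' [Mt | ->] [Mt' | ->] [i e].
        -- exact (Mdisj t t' Mt Mt' (ex_intro _ i e)).
        -- destruct (proj2 (hs i) t Mt e).
        -- destruct (proj2 (hs i) t' Mt' (eq_sym e)).
        -- reflexivity.
Qed.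

Lemma card_le_minimum (i0 : I) :
  exists m, forall i, card_le (sig_of (A m)) (sig_of (A i)).
Proof.
  destruct (disjoint_selections_exhaust i0) as [M [[MA Mdisj] [m exhaust]]].
  exists m. intros i.
  apply (card_le_rel _ _ (fun u v => exists t, M t /\ t m = proj1_sig u /\ t i = proj1_sig v)).
  - intros [x Ax]. destruct (exhaust x Ax) as [t [Mt tm]].
    exists (exist _ (t i) (MA t Mt i)). exists t. auto.
  - intros [x Ax] [x' Ax'] v [t [Mt [tm ti]]] [t' [Mt' [tm' ti']]]. simpl in *.
    assert (t = t') as <- by (apply Mdisj; auto; exists i; congruence).
    apply proj1_sig_inj. simpl. congruence.
Qed.

End CardinalMinimum.

Lemma card_le_sig_total {T : Type} (A B : T -> Prop) :
  card_le (sig_of A) (sig_of B) \/ card_le (sig_of B) (sig_of A).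
Proof.
  destruct (card_le_minimum bool T (fun b => if b then A else B) true) as [[|] min].
  - left. exact (min false).
  - right. exact (min true).
Qed.

Lemma exists_card_le_min_set {T : Type} (Q : (T -> Prop) -> Prop) (A0 : T -> Prop) :
  Q A0 -> exists A, Q A /\ forall B, Q B -> card_le (sig_of A) (sig_of B).
Proof.
  intros QA0.
  destruct (card_le_minimum {B | Q B} T (@proj1_sig _ _) (exist _ A0 QA0)) as [[A QA] min].
  exists A. split; [exact QA |]. intros B QB. exact (min (exist _ B QB)).
Qed.

Definition correspondence {T1 T2 : Type} (A : T1 -> Prop) (B : T2 -> Prop)
  (R : T1 -> T2 -> Prop) : Prop :=
  (forall x y, R x y -> A x /\ B y) /\
  (forall x, A x -> exists y, R x y) /\ (forall y, B y -> exists x, R x y).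

Lemma correspondence_flip {T1 T2 : Type} (A : T1 -> Prop) (B : T2 -> Prop) R :
  correspondence A B R -> correspondence B A (fun y x => R x y).
Proof.
  intros [RAB [RA RB]]. split; [| split; assumption].
  intros y x Rxy. destruct (RAB x y Rxy). split; assumption.
Qed.

Lemma card_le_correspondence {T1 T2 : Type} (A : T1 -> Prop) (B : T2 -> Prop) a0 :
  A a0 -> card_le (sig_of A) (sig_of B) ->
  exists R, correspondence A B R /\ forall x x' y, R x y -> R x' y -> x = x'.
Proof.
  intros Aa0 [f finj].
  pose (hit y := exists x (h : A x), proj1_sig (f (exist _ x h)) = y).
  exists (fun x y => (exists h : A x, proj1_sig (f (exist _ x h)) = y) \/
                     (x = a0 /\ B y /\ ~ hit y)).
  split; [split; [| split] |].
  - intros x y [[h <-] | [-> [By _]]].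
    + split; [exact h | exact (proj2_sig _)].
    + split; assumption.
  - intros x h. exists (proj1_sig (f (exist _ x h))). left. exists h. reflexivity.
  - intros y By. destruct (classic (hit y)) as [[x [h e]] | nhit].
    + exists x. left. exists h. exact e.
    + exists a0. right. auto.
  - intros x x' y [[h e] | [-> [_ nhit]]] [[h' e'] | [-> [_ nhit']]].
    + assert (exist _ x h = exist A x' h') as ee.
      { apply finj, proj1_sig_inj. exact (eq_trans e (eq_sym e')). }
      exact (f_equal (@proj1_sig _ _) ee).
    + destruct nhit'. exists x, h. exact e.
    + destruct nhit. exists x', h'. exact e'.
    + reflexivity.
Qed.

Section LocalMonoid.
Variable S : Type.
Variable mul : S -> S -> S.

Local Notation "x ** y" := (mul x y) (at level 40, left associativity).
Local Notation gen := (gen S mul).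

Lemma gen_ind (A T : sset S) x :
  subset A T -> (forall x y, T x -> T y -> T (x ** y)) -> gen A x -> T x.
Proof. intros hA hT g. induction g; auto. Qed.

Lemma gen_gen (A B : sset S) x : subset A (gen B) -> gen A x -> gen B x.
Proof. intros hA g. induction g; auto. apply gen_mul; auto. Qed.

Lemma gen_mono (A B : sset S) x : subset A B -> gen A x -> gen B x.
Proof. intros hA. apply gen_gen. intros y h. apply gen_base; auto. Qed.

Lemma gen_inhabited (A : sset S) x : gen A x -> exists y, A y.
Proof. intros g; induction g; eauto. Qed.

Hypothesis assoc : forall x y z, x ** (y ** z) = x ** y ** z.
Variable a : S.
Hypothesis idem : a ** a = a.

Local Notation L := (local S mul a).
Local Notation P := (Pset S mul a).
Local Notation H := (Hclass S mul a).
Local Notation Rhat := (Rhat S mul a).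
Local Notation RP := (GreenR_in S mul P).

Lemma mul_a_idem x : x ** a ** a = x ** a.
Proof. rewrite <- assoc, idem. reflexivity. Qed.

Lemma P_mul_a x : P x -> x ** a = x.
Proof. intros [[s ->] _]. apply mul_a_idem. Qed.

Lemma local_a_mul x : L x -> a ** x = x.
Proof. intros [s ->]. rewrite !assoc, idem. reflexivity. Qed.

Lemma local_mul x y : L x -> L y -> L (x ** y).
Proof.
  intros [s ->] [t ->]. exists (s ** a ** t). rewrite !assoc, !mul_a_idem. reflexivity.
Qed.

Lemma local_a : L a.
Proof. exists a. rewrite !idem. reflexivity. Qed.

Lemma local_P x : L x -> P x.
Proof.
  intros Lx. split.
  - destruct Lx as [s ->]. exists (a ** s). reflexivity.
  - rewrite (local_a_mul x Lx). split; left; reflexivity.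
Qed.

Lemma P_mul x y : P x -> P y -> P (x ** y).
Proof.
  intros [_ [Lxax _]] [[t ->] _]. split.
  - exists (x ** t). apply assoc.
  - split; [| right; exists a; reflexivity].
    destruct Lxax as [e | [c e]].
    + left. rewrite (assoc a x), <- e. reflexivity.
    + right. exists c. rewrite (assoc a x), (assoc c (a ** x)), <- e. reflexivity.
Qed.

Lemma gen_P (U : sset S) x : subset U P -> gen U x -> P x.
Proof. intros UP. apply gen_ind; [exact UP | exact P_mul]. Qed.

Lemma local_a_mul_P x : P x -> L (a ** x).
Proof. intros [[s ->] _]. exists s. apply assoc. Qed.

Lemma a_mul_hom x y : P x -> a ** (x ** y) = a ** x ** (a ** y).
Proof.
  intros Px. rewrite (assoc (a ** x) a y), <- (assoc a x a), (P_mul_a x Px), assoc.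
  reflexivity.
Qed.

Lemma H_a : H a.
Proof. split; split; left; reflexivity. Qed.

Lemma H_mul_a g : H g -> g ** a = g.
Proof.
  intros [_ [[e | [s e]] _]]; rewrite e; [apply idem | apply mul_a_idem].
Qed.

Lemma H_local g : H g -> L g.
Proof.
  intros Hg. pose proof (H_mul_a g Hg) as ga. destruct Hg as [[[e | [s e]] _] _].
  - rewrite e. exact local_a.
  - exists s. rewrite <- e. symmetry. exact ga.
Qed.

Lemma H_right_inverse g : H g -> exists g', L g' /\ g ** g' = a.
Proof.
  intros Hg. pose proof (H_mul_a g Hg) as ga. destruct Hg as [[_ [e | [s e]]] _].
  - exists a. split; [exact local_a |]. rewrite <- e. exact idem.
  - exists (a ** s ** a). split; [exists s; reflexivity |].
    rewrite !assoc, ga, <- e, idem. reflexivity.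
Qed.

Lemma RP_refl x : P x -> RP x x.
Proof. intros Px. split; [exact Px |]. split; [exact Px |]. split; left; reflexivity. Qed.

Lemma RP_sym x y : RP x y -> RP y x.
Proof. intros [? [? [? ?]]]. split; [| split; [| split]]; assumption. Qed.

Lemma leR_P_trans x y z :
  leR_in S mul P x y -> leR_in S mul P y z -> leR_in S mul P x z.
Proof.
  intros [-> | [t [Pt ->]]] [-> | [t' [Pt' ->]]]; try (left; reflexivity);
    right; eauto.
  exists (t' ** t). split; [apply P_mul; assumption | apply eq_sym, assoc].
Qed.

Lemma RP_trans x y z : RP x y -> RP y z -> RP x z.
Proof.
  intros [? [? [? ?]]] [? [? [? ?]]].
  split; [| split; [| split]]; try assumption; eapply leR_P_trans; eassumption.
Qed.

Lemma RP_class_eq x y : RP x y -> (fun z => RP x z) = (fun z => RP y z).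
Proof.
  intros Rxy. apply functional_extensionality. intros z.
  apply propositional_extensionality. split; intros h.
  - exact (RP_trans _ _ _ (RP_sym _ _ Rxy) h).
  - exact (RP_trans _ _ _ Rxy h).
Qed.

Lemma first_factor (U : sset S) y :
  subset U P -> gen U y -> exists u, U u /\ (y = u \/ exists p, P p /\ y = u ** p).
Proof.
  intros UP g. induction g as [x Ux | x y gx IHx gy _].
  - exists x. auto.
  - destruct IHx as [u [Uu [-> | [p [Pp ->]]]]]; exists u; split; auto; right.
    + exists y. split; [exact (gen_P U y UP gy) | reflexivity].
    + exists (p ** y). split; [exact (P_mul p y Pp (gen_P U y UP gy)) | apply eq_sym, assoc].
Qed.

Hypothesis hideal : ideal_of S mul L (setminus L H).

Lemma local_mul_H x y : L x -> L y -> H (x ** y) -> H x /\ H y.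
Proof.
  intros Lx Ly Hxy. destruct hideal as [_ closed]. split; apply NNPP; intros nH.
  - exact (proj2 (proj1 (closed x y (conj Lx nH) Ly)) Hxy).
  - exact (proj2 (proj2 (closed y x (conj Ly nH) Lx)) Hxy).
Qed.

Lemma P_mul_H x y : P x -> P y -> H (a ** (x ** y)) -> H (a ** x) /\ H (a ** y).
Proof.
  intros Px Py. rewrite a_mul_hom by exact Px.
  apply local_mul_H; apply local_a_mul_P; assumption.
Qed.

Lemma Rhat_iff x : Rhat x <-> P x /\ H (a ** x).
Proof.
  split.
  - intros [Px [Lax [_ [_ le_a]]]]. split; [exact Px |]. apply NNPP; intros nH.
    destruct le_a as [e | [t [Lt e]]].
    + apply nH. rewrite <- e. exact H_a.
    + apply (proj2 (proj1 (proj2 hideal _ _ (conj Lax nH) Lt))). rewrite <- e. exact H_a.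
  - intros [Px Hax]. split; [exact Px |]. split; [exact (H_local _ Hax) |].
    split; [exact local_a |]. split.
    + right. exists (a ** x). split; [exact (H_local _ Hax) |]. rewrite assoc, idem. reflexivity.
    + destruct (H_right_inverse _ Hax) as [g' [Lg' e]]. right. exists g'. auto.
Qed.

Lemma RP_mul_H u p : P u -> P p -> H (a ** p) -> RP u (u ** p).
Proof.
  intros Pu Pp Hap. destruct (H_right_inverse _ Hap) as [q [Lq apq]].
  split; [exact Pu |]. split; [exact (P_mul u p Pu Pp) |]. split.
  - right. exists q. split; [exact (local_P q Lq) |].
    rewrite <- (P_mul_a u Pu) at 2.
    rewrite <- (assoc u a p), <- (assoc u (a ** p) q), apq, P_mul_a by exact Pu.
    reflexivity.
  - right. exists p. split; [exact Pp | reflexivity].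
Qed.

Section LowerBound.
Variable U : sset S.
Hypothesis U_generates : generates S mul P U.

Definition aU : sset S := fun v => exists u, U u /\ v = a ** u.

Lemma aU_local v : aU v -> L v.
Proof. intros [u [Uu ->]]. exact (local_a_mul_P u (proj1 U_generates u Uu)). Qed.

Lemma gen_aU_local x : L x -> gen aU x.
Proof.
  intros Lx. rewrite <- (local_a_mul x Lx).
  assert (hom : forall y, gen U y -> gen aU (a ** y)).
  { intros y g. induction g as [u Uu | y z gy IHy gz IHz].
    - apply gen_base. exists u. auto.
    - rewrite a_mul_hom by exact (gen_P U y (proj1 U_generates) gy).
      apply gen_mul; assumption. }
  exact (hom x (proj2 U_generates x (local_P x Lx))).
Qed.

Lemma rel_generates_aU_minus_H : rel_generates S mul L H (setminus aU H).
Proof.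
  split; [intros v [aUv _]; exact (aU_local v aUv) |].
  intros x Lx. apply (gen_mono aU); [| exact (gen_aU_local x Lx)].
  intros v aUv. destruct (classic (H v)) as [Hv | nHv].
  - left. exact Hv.
  - right. split; assumption.
Qed.

Lemma generates_H_aU_cap_H : generates S mul H (fun v => aU v /\ H v).
Proof.
  split; [intros v [_ Hv]; exact Hv |].
  assert (restrict : forall y, gen aU y -> H y -> gen (fun v => aU v /\ H v) y).
  { intros y g. induction g as [v aUv | y z gy IHy gz IHz]; intros Hyz.
    - apply gen_base. split; assumption.
    - pose proof (gen_ind aU L y aU_local local_mul gy) as Ly.
      pose proof (gen_ind aU L z aU_local local_mul gz) as Lz.
      destruct (local_mul_H y z Ly Lz Hyz). apply gen_mul; auto. }
  intros x Hx. exact (restrict x (gen_aU_local x (H_local x Hx)) Hx).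
Qed.

Lemma card_le_aU_split :
  card_le (sig_of (setminus aU H) + sig_of (fun v => aU v /\ H v)) (sig_of U).
Proof.
  apply (card_le_rel _ _ (fun s u => a ** proj1_sig u =
           match s with inl v => proj1_sig v | inr w => proj1_sig w end)).
  - intros [v | w]; [destruct (proj1 (proj2_sig v)) as [u [Uu e]]
                     | destruct (proj1 (proj2_sig w)) as [u [Uu e]]];
      exists (exist _ u Uu); exact (eq_sym e).
  - intros [v | w] [v' | w'] u; simpl; intros e e'.
    + f_equal. apply proj1_sig_inj. congruence.
    + destruct (proj2 (proj2_sig v)). rewrite <- e, e'. exact (proj2 (proj2_sig w')).
    + destruct (proj2 (proj2_sig v')). rewrite <- e', e. exact (proj2 (proj2_sig w)).
    + f_equal. apply proj1_sig_inj. congruence.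
Qed.

Lemma Rhat_class_repr (C : RPclasses_in_Rhat S mul a) :
  exists u, U u /\ H (a ** u) /\ proj1_sig C = (fun y => RP u y).
Proof.
  destruct C as [C [x0 [Px0 [-> sub]]]]. simpl.
  assert (Hax0 : H (a ** x0)) by exact (proj2 (proj1 (Rhat_iff x0) (sub x0 (RP_refl x0 Px0)))).
  destruct (first_factor U x0 (proj1 U_generates) (proj2 U_generates x0 Px0))
    as [u [Uu [-> | [p [Pp ->]]]]]; exists u; split; auto.
  pose proof (proj1 U_generates u Uu) as Pu.
  destruct (P_mul_H u p Pu Pp Hax0) as [Hau Hap].
  split; [exact Hau |]. symmetry. exact (RP_class_eq _ _ (RP_mul_H u p Pu Pp Hap)).
Qed.

Lemma card_le_aU_classes :
  card_le (sig_of (setminus aU H) + RPclasses_in_Rhat S mul a) (sig_of U).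
Proof.
  apply (card_le_rel _ _ (fun s u => match s with
           | inl v => proj1_sig v = a ** proj1_sig u
           | inr C => H (a ** proj1_sig u) /\ proj1_sig C = (fun y => RP (proj1_sig u) y)
           end)).
  - intros [v | C].
    + destruct (proj1 (proj2_sig v)) as [u [Uu e]]. exists (exist _ u Uu). exact e.
    + destruct (Rhat_class_repr C) as [u [Uu hu]]. exists (exist _ u Uu). exact hu.
  - intros [v | C] [v' | C'] u; simpl.
    + intros e e'. f_equal. apply proj1_sig_inj. congruence.
    + intros e [Hau _]. destruct (proj2 (proj2_sig v)). rewrite e. exact Hau.
    + intros [Hau _] e. destruct (proj2 (proj2_sig v')). rewrite e. exact Hau.
    + intros [_ e] [_ e']. f_equal. apply proj1_sig_inj. congruence.
Qed.

End LowerBound.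

Lemma rank_P_lower_bound (U : sset S) : generates S mul P U ->
  (exists V, rel_generates S mul L H V /\
     card_le (sig_of V + RPclasses_in_Rhat S mul a) (sig_of U)) /\
  (exists V W, rel_generates S mul L H V /\ generates S mul H W /\
     card_le (sig_of V + sig_of W) (sig_of U)).
Proof.
  intros hU. split.
  - exists (setminus (aU U) H). split.
    + exact (rel_generates_aU_minus_H U hU).
    + exact (card_le_aU_classes U hU).
  - exists (setminus (aU U) H), (fun v => aU U v /\ H v). split; [| split].
    + exact (rel_generates_aU_minus_H U hU).
    + exact (generates_H_aU_cap_H U hU).
    + exact (card_le_aU_split U).
Qed.

Definition fibre_a : sset S := fun x => P x /\ a ** x = a.

Lemma fibre_a_mul_H x w : fibre_a x -> H w -> a ** (x ** w) = w.
Proof. intros [_ ax] Hw. rewrite assoc, ax. exact (local_a_mul w (H_local w Hw)). Qed.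

Lemma fibre_a_cancel x x' w w' p : fibre_a x -> fibre_a x' -> H w' -> P p ->
  x' ** w' = x ** w ** p -> x' = x.
Proof.
  intros [Px ax] [Px' ax'] Hw' Pp E.
  destruct (H_right_inverse w' Hw') as [w'' [_ ew'']].
  assert (x'_eq : x' = x ** (w ** p ** w'')).
  { rewrite <- (P_mul_a x' Px'), <- ew'', assoc, E, !assoc. reflexivity. }
  assert (a_eq : a = a ** (w ** p ** w'')).
  { rewrite <- ax' at 1. rewrite x'_eq, assoc, ax. reflexivity. }
  rewrite x'_eq. transitivity (x ** a ** (w ** p ** w'')).
  - rewrite (P_mul_a x Px). reflexivity.
  - rewrite <- assoc, <- a_eq. exact (P_mul_a x Px).
Qed.

Definition lift_gens (V0 : sset S) (R : S -> S -> Prop) : sset S :=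
  setU V0 (fun z => exists x w, R x w /\ z = x ** w).

Section UpperBound.
Variables (V0 W0 : sset S) (R : S -> S -> Prop).
Hypothesis V0_rel_generates : rel_generates S mul L H V0.
Hypothesis W0_generates : generates S mul H W0.
Hypothesis R_corr : correspondence fibre_a W0 R.

Local Notation U := (lift_gens V0 R).

Lemma lift_gens_P : subset U P.
Proof.
  intros z [V0z | [x [w [Rxw ->]]]].
  - exact (local_P z (proj1 V0_rel_generates z V0z)).
  - destruct (proj1 R_corr x w Rxw) as [[Px _] W0w].
    exact (P_mul x w Px (local_P w (H_local w (proj1 W0_generates w W0w)))).
Qed.

Lemma gen_lift_gens_mul_local y s : gen U y -> L s -> gen U (y ** s).
Proof.
  intros gy Ls.
  assert (gs : gen (setU W0 V0) s).
  { apply (gen_gen (setU H V0)); [| exact (proj2 V0_rel_generates s Ls)].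
    intros t [Ht | V0t].
    - apply (gen_mono W0); [intros u W0u; left; exact W0u | exact (proj2 W0_generates t Ht)].
    - apply gen_base. right. exact V0t. }
  clear Ls. revert y gy. induction gs as [s [W0s | V0s] | s t gs IHs gt IHt]; intros y gy.
  - destruct (proj2 (proj2 R_corr) s W0s) as [x Rxs].
    destruct (proj1 R_corr x s Rxs) as [Fx _].
    rewrite <- (fibre_a_mul_H x s Fx (proj1 W0_generates s W0s)), assoc,
      (P_mul_a y (gen_P U y lift_gens_P gy)).
    apply gen_mul; [exact gy |]. apply gen_base. right. exists x, s. auto.
  - apply gen_mul; [exact gy |]. apply gen_base. left. exact V0s.
  - rewrite assoc. apply IHt, IHs, gy.
Qed.

(* A right identity [e] of [P] lies in the fibre of [a], and [e = e ** w ** w'] for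
   the partner [w] of [e] and an inverse [w'] of [w] in [aSa]. *)
Lemma lift_gens_generates : RI_dominated S mul P -> generates S mul P U.
Proof.
  intros RI. split; [exact lift_gens_P |].
  intros x Px. destruct (RI x Px) as [e [Pe [right_id x_eq]]].
  assert (Fe : fibre_a e) by exact (conj Pe (right_id a (local_P a local_a))).
  destruct (proj1 (proj2 R_corr) e Fe) as [w Rew].
  destruct (H_right_inverse w (proj1 W0_generates w (proj2 (proj1 R_corr e w Rew))))
    as [w' [Lw' ww']].
  assert (Uew : U (e ** w)) by (right; exists e, w; auto).
  assert (e_eq : e = e ** w ** w') by (rewrite <- assoc, ww'; exact (eq_sym (P_mul_a e Pe))).
  destruct x_eq as [-> | [t [Pt ->]]].
  - rewrite e_eq. exact (gen_lift_gens_mul_local _ _ (gen_base _ _ _ _ Uew) Lw').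
  - replace (e ** t) with (e ** w ** (w' ** (a ** t))).
    + apply gen_lift_gens_mul_local; [exact (gen_base _ _ _ _ Uew) |].
      exact (local_mul w' (a ** t) Lw' (local_a_mul_P t Pt)).
    + rewrite (assoc (e ** w)), <- e_eq, assoc, (P_mul_a e Pe). reflexivity.
Qed.

Lemma card_le_lift_gens_W0 : (forall x x' w, R x w -> R x' w -> x = x') ->
  card_le (sig_of U) (sig_of V0 + sig_of W0).
Proof.
  intros R_inj.
  apply (card_le_rel _ _ (fun z y => match y with
           | inl v => proj1_sig z = proj1_sig v
           | inr w => ~ V0 (proj1_sig z) /\ proj1_sig w = a ** proj1_sig z
           end)).
  - intros [z Uz]. destruct (classic (V0 z)) as [V0z | nV0z].
    + exists (inl (exist _ z V0z)). reflexivity.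
    + destruct Uz as [V0z | [x [w [Rxw ->]]]]; [contradiction |].
      destruct (proj1 R_corr x w Rxw) as [Fx W0w].
      exists (inr (exist _ w W0w)). simpl.
      split; [exact nV0z | exact (eq_sym (fibre_a_mul_H x w Fx (proj1 W0_generates w W0w)))].
  - intros [z Uz] [z' Uz'] [v | w]; simpl.
    + intros e e'. apply proj1_sig_inj. simpl. congruence.
    + intros [nV0z e] [nV0z' e']. apply proj1_sig_inj. simpl.
      destruct Uz as [? | [x [w1 [Rxw1 ->]]]]; [contradiction |].
      destruct Uz' as [? | [x' [w1' [Rxw1' ->]]]]; [contradiction |].
      destruct (proj1 R_corr x w1 Rxw1) as [Fx W0w1].
      destruct (proj1 R_corr x' w1' Rxw1' ) as [Fx' W0w1'].
      rewrite (fibre_a_mul_H x w1 Fx (proj1 W0_generates w1 W0w1)) in e.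
      rewrite (fibre_a_mul_H x' w1' Fx' (proj1 W0_generates w1' W0w1')) in e'.
      assert (w1' = w1) as -> by congruence.
      rewrite (R_inj x x' w1 Rxw1 Rxw1'). reflexivity.
Qed.

Lemma lift_gens_class_Rhat z : U z -> ~ V0 z -> subset (fun y => RP z y) Rhat.
Proof.
  intros [V0z | [x [w [Rxw ->]]]] nV0z; [contradiction |].
  destruct (proj1 R_corr x w Rxw) as [Fx W0w].
  pose proof (proj1 W0_generates w W0w) as Hw.
  intros y [_ [Py [le_zy _]]]. apply Rhat_iff. split; [exact Py |].
  assert (Hz : H (a ** (x ** w))) by (rewrite (fibre_a_mul_H x w Fx Hw); exact Hw).
  destruct le_zy as [e | [q [Pq e]]]; rewrite e in Hz;
    [exact Hz | exact (proj1 (P_mul_H y q Py Pq Hz))].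
Qed.

Lemma card_le_lift_gens_classes : (forall x w w', R x w -> R x w' -> w = w') ->
  card_le (sig_of U) (sig_of V0 + RPclasses_in_Rhat S mul a).
Proof.
  intros R_fun.
  apply (card_le_rel _ _ (fun z y => match y with
           | inl v => proj1_sig z = proj1_sig v
           | inr C => ~ V0 (proj1_sig z) /\ proj1_sig C = (fun y => RP (proj1_sig z) y)
           end)).
  - intros [z Uz]. destruct (classic (V0 z)) as [V0z | nV0z].
    + exists (inl (exist _ z V0z)). reflexivity.
    + assert (class_z : exists x, P x /\ (fun y => RP z y) = (fun y => RP x y) /\
                                  subset (fun y => RP z y) Rhat).
      { exists z. split; [exact (lift_gens_P z Uz) |].
        split; [reflexivity | exact (lift_gens_class_Rhat z Uz nV0z)]. }
      exists (inr (exist _ (fun y => RP z y) class_z)). simpl. auto.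
  - intros [z Uz] [z' Uz'] [v | C]; simpl.
    + intros e e'. apply proj1_sig_inj. simpl. congruence.
    + intros [nV0z e] [nV0z' e']. apply proj1_sig_inj. simpl.
      assert (RPzz' : RP z z').
      { change ((fun y => RP z y) z'). rewrite <- e, e'. exact (RP_refl z' (lift_gens_P z' Uz')). }
      destruct RPzz' as [_ [_ [_ [<- | [p [Pp z'_eq]]]]]]; [reflexivity |].
      destruct Uz as [? | [x [w [Rxw ->]]]]; [contradiction |].
      destruct Uz' as [? | [x' [w' [Rxw' ->]]]]; [contradiction |].
      destruct (proj1 R_corr x w Rxw) as [Fx _].
      destruct (proj1 R_corr x' w' Rxw') as [Fx' W0w'].
      assert (x' = x) as ->
        by exact (fibre_a_cancel x x' w w' p Fx Fx' (proj1 W0_generates w' W0w') Pp z'_eq).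
      rewrite (R_fun x w w' Rxw Rxw'). reflexivity.
Qed.

End UpperBound.

Lemma rank_P_upper_bound : RI_dominated S mul P ->
  exists U, generates S mul P U /\
    forall V W, rel_generates S mul L H V -> generates S mul H W ->
      card_le (sig_of U) (sig_of V + RPclasses_in_Rhat S mul a) \/
      card_le (sig_of U) (sig_of V + sig_of W).
Proof.
  intros RI.
  destruct (exists_card_le_min_set (rel_generates S mul L H) L) as [V0 [V0_rel V0_min]].
  { split; [intros x Lx; exact Lx | intros x Lx; apply gen_base; right; exact Lx]. }
  destruct (exists_card_le_min_set (generates S mul H) H) as [W0 [W0_gen W0_min]].
  { split; [intros x Hx; exact Hx | intros x Hx; apply gen_base; exact Hx]. }
  destruct (card_le_sig_total fibre_a W0) as [le_FW | le_WF].
  - destruct (card_le_correspondence fibre_a W0 a (conj (local_P a local_a) idem) le_FW)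
      as [R [R_corr R_inj]].
    exists (lift_gens V0 R). split; [exact (lift_gens_generates V0 W0 R V0_rel W0_gen R_corr RI) |].
    intros V W V_rel W_gen. right.
    apply (card_le_trans _ _ _ (card_le_lift_gens_W0 V0 W0 R W0_gen R_corr R_inj)).
    exact (card_le_sum _ _ _ _ (V0_min V V_rel) (W0_min W W_gen)).
  - destruct (gen_inhabited W0 a (proj2 W0_gen a H_a)) as [w0 W0w0].
    destruct (card_le_correspondence W0 fibre_a w0 W0w0 le_WF) as [R [R_corr R_inj]].
    pose proof (correspondence_flip W0 fibre_a R R_corr) as R_corr'.
    exists (lift_gens V0 (fun x w => R w x)).
    split; [exact (lift_gens_generates V0 W0 _ V0_rel W0_gen R_corr' RI) |].
    intros V W V_rel W_gen. left.
    apply (card_le_trans _ _ _ (card_le_lift_gens_classes V0 W0 _ V0_rel W0_gen R_corr'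
                                 (fun x w w' h h' => R_inj w w' x h h'))).
    exact (card_le_sum _ _ _ _ (V0_min V V_rel) (card_le_refl _)).
Qed.

End LocalMonoid.

Theorem theorem3p27 (S : Type) (mul : S -> S -> S)
  (assoc : forall x y z, mul x (mul y z) = mul (mul x y) z)
  (a : S) (idem : mul a a = a)
  (hreg : forall x, local S mul a x -> regular S mul x)
  (hideal : ideal_of S mul (local S mul a) (setminus (local S mul a) (Hclass S mul a))) :
  (* rank(P) >= rank(aSa : H_a) + max(rho, rank(H_a)) *)
  (forall U, generates S mul (Pset S mul a) U ->
     (exists V, rel_generates S mul (local S mul a) (Hclass S mul a) V /\
        card_le (sig_of V + RPclasses_in_Rhat S mul a) (sig_of U)) /\
     (exists V W, rel_generates S mul (local S mul a) (Hclass S mul a) V /\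
        generates S mul (Hclass S mul a) W /\
        card_le (sig_of V + sig_of W) (sig_of U)))
  /\
  (* equality when P is RI-dominated *)
  (RI_dominated S mul (Pset S mul a) ->
     exists U, generates S mul (Pset S mul a) U /\
       forall V W, rel_generates S mul (local S mul a) (Hclass S mul a) V ->
         generates S mul (Hclass S mul a) W ->
         (card_le (sig_of U) (sig_of V + RPclasses_in_Rhat S mul a) \/
          card_le (sig_of U) (sig_of V + sig_of W))).
Proof.
  split.
  - exact (rank_P_lower_bound S mul assoc a idem hideal).
  - exact (rank_P_upper_bound S mul assoc a idem hideal).
Qed.
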